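(* Let $s_1,s_2,s_3\in\Sigma^n$ be such that $s_1,s_2$ are matching and $s_2,s_3$ are matching, and let $h = h_{s_1,s_2}\oplus h_{s_2,s_3}$ (position-wise XOR). (i) If $h$ contains no two consecutive $1$s, then $s_1$ and $s_3$ are matching and $h = h_{s_1,s_3}$. (ii) If $h[p-1]=h[p]=1$ for some $p$, then $s_1$ and $s_3$ are not matching, and every string $t\in\Sigma^n$ that matches both $s_1$ and $s_3$ satisfies $t[p-1..p+1] = s_2[p-1..p+1]$.
   Context: The swap at position $p$ transforms $s$ into $s[1]\cdots s[p-1]\,s[p+1]\,s[p]\,s[p+2]\cdots s[|s|]$. A swap permutation is a set of swaps at positions pairwise differing by at least $2$ (applied simultaneously). Two strings of length $n$ are matching if some swap permutation transforms one into the other. A swap permutation is valid if it never swaps two identical letters; for matching strings $u,v$ there is a unique valid swap permutation from $u$ to $v$, and $h_{u,v}$ denotes its swap string: the binary string of length $n-1$ with $h_{u,v}[p]=1$ iff this valid permutation swaps positions $(p,p+1)$. *)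

(* Strings are sequences over an eqType alphabet; all
   positions are 0-based. *)
From mathcomp Require Import all_boot.
Set Implicit Arguments. Unset Strict Implicit. Unset Printing Implicit Defensive.

Section Swaps.
Variable Sigma : eqType.

(* A set of swap positions is encoded as a bitseq P: position p is swapped
   (i.e. letters p and p+1 exchanged) iff nth false P p. *)

Definition swapsep (P : bitseq) : bool :=
  ~~ has (fun i => nth false P i && nth false P i.+1) (iota 0 (size P)).

Definition swap_idx (P : bitseq) (i : nat) : nat :=
  if nth false P i then i.+1
  else if (0 < i) && nth false P i.-1 then i.-1 else i.

Definition apply_swaps (P : bitseq) (s : seq Sigma) : seq Sigma :=
  if s is x0 :: _ then [seq nth x0 s (swap_idx P i) | i <- iota 0 (size s)]
  else [::].

Definition swap_perm_for (s : seq Sigma) (P : bitseq) : bool :=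
  (size P == (size s).-1) && swapsep P.

Definition matching (u v : seq Sigma) : Prop :=
  exists P : bitseq, swap_perm_for u P /\ apply_swaps P u = v.

Definition valid_swaps (u : seq Sigma) (P : bitseq) : bool :=
  all (fun i => nth false P i ==> (onth u i != onth u i.+1)) (iota 0 (size P)).

(* h_{u,v}: the swap string of the (unique) valid swap permutation from u to v
   (an arbitrary all-zero default if there is none, i.e. u, v not matching). *)
Definition hstr (u v : seq Sigma) : bitseq :=
  match [pick P : ((size u).-1).-tuple bool |
           swapsep P && valid_swaps u P && (apply_swaps P u == v)] with
  | Some P => val P
  | None => nseq (size u).-1 false
  end.

End Swaps.

Definition xorb_seq (a b : bitseq) : bitseq := [seq p.1 (+) p.2 | p <- zip a b].

(* If h has no two consecutive 1s, composing the index maps of the two valid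
   swap permutations gives the index map of h, so h transforms s1 into s3; it
   is valid because wherever only the second one swaps, the first one leaves
   both letters in place.  Otherwise, say h_{s1,s2} swaps at p and h_{s2,s3}
   at p+1 (the other case is symmetric).  A swap permutation changes the
   number of occurrences of a letter among the first k+1 letters only through
   a swap at k; comparing these prefix counts of the letter s1[p] for k = p and
   k = p+1 shows that a common match t of s1 and s3 differs from s1 by a swap
   at p and from s3 by a swap at p+1, which pins t[p..p+2] to s2[p..p+2].
   Taking t = s1 contradicts the validity of h_{s1,s2} at p. *)
From mathcomp Require Import all_boot zify.
Set Implicit Arguments. Unset Strict Implicit. Unset Printing Implicit Defensive.

Lemma nth_true_lt (P : bitseq) i : nth false P i -> i < size P.
Proof. by apply: contraTT; rewrite -leqNgt => /(nth_default false) ->. Qed.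

Lemma swapsep_adj (P : bitseq) i : swapsep P -> nth false P i && nth false P i.+1 = false.
Proof.
move=> /hasPn sepP; have [ltiP|leP] := ltnP i (size P).
  by apply/negbTE/sepP; rewrite mem_iota.
by rewrite nth_default.
Qed.

Lemma nth_xorb_seq (a b : bitseq) j : size a = size b ->
  nth false (xorb_seq a b) j = nth false a j (+) nth false b j.
Proof.
move=> eq_ab; rewrite /xorb_seq; have [ltja|leaj] := ltnP j (size a).
  by rewrite (nth_map (false, false)) ?nth_zip // size_zip -eq_ab minnn.
by rewrite !nth_default ?size_map ?size_zip -?eq_ab ?minnn.
Qed.

Lemma size_xorb_seq (a b : bitseq) : size a = size b -> size (xorb_seq a b) = size a.
Proof. by move=> eq_ab; rewrite size_map size_zip eq_ab minnn. Qed.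

Lemma xorb_adjacent (a b : bitseq) p : size a = size b -> swapsep a -> swapsep b ->
  nth false (xorb_seq a b) p -> nth false (xorb_seq a b) p.+1 ->
  (nth false a p && nth false b p.+1) || (nth false b p && nth false a p.+1).
Proof.
move=> eq_ab sa sb; rewrite !nth_xorb_seq //.
move: (swapsep_adj p sa) (swapsep_adj p sb).
by case: (nth false a p); case: (nth false b p);
   case: (nth false a p.+1); case: (nth false b p.+1).
Qed.

Ltac is_index j := lazymatch j with O => idtac | S ?j' => is_index j' | _ => is_var j end.

Ltac case_bits_of P := repeat match goal with
  |- context [nth false P ?j] => is_index j; case: (nth false P j) => /= end.

(* Exhaustive case analysis on the bits [nth false P j] at positions [k + c];
   bits of a sequence indexed by the bits of another one must be cased first
   with [case_bits_of], lest a bit reappear after it has been cased. *)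
Ltac bit_cases := repeat match goal with
  |- context [nth false ?P ?j] => is_index j; case: (nth false P j) => /= end;
  intros; first [discriminate | reflexivity | lia].

Section SwapIndex.
Variables P1 P2 h : bitseq.
Hypotheses (sep1 : swapsep P1) (sep2 : swapsep P2) (seph : swapsep h).
Hypothesis nth_h : forall j, nth false h j = nth false P1 j (+) nth false P2 j.

Lemma swap_idx_comp i : swap_idx P1 (swap_idx P2 i) = swap_idx h i.
Proof.
have a1 := @swapsep_adj P1 ^~ sep1; have a2 := @swapsep_adj P2 ^~ sep2.
have ah := @swapsep_adj h ^~ seph.
case: i => [|[|k]]; rewrite /swap_idx !nth_h /=.
- by move: (a1 0) (a2 0) (ah 0); rewrite !nth_h; case_bits_of P2; bit_cases.
- by move: (a1 0) (a1 1) (a2 0) (a2 1) (ah 0) (ah 1); rewrite !nth_h; case_bits_of P2; bit_cases.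
- move: (a1 k) (a1 k.+1) (a1 k.+2) (a2 k) (a2 k.+1) (a2 k.+2) (ah k) (ah k.+1) (ah k.+2).
  by rewrite !nth_h; case_bits_of P2; bit_cases.
Qed.

Lemma swap_idx_fixed i : nth false P2 i -> ~~ nth false P1 i ->
  swap_idx P1 i = i /\ swap_idx P1 i.+1 = i.+1.
Proof.
have a1 := @swapsep_adj P1 ^~ sep1; have a2 := @swapsep_adj P2 ^~ sep2.
have ah := @swapsep_adj h ^~ seph.
case: i => [|k]; rewrite /swap_idx /=.
- by move: (a1 0) (a2 0) (ah 0); rewrite !nth_h; bit_cases.
- by move: (a1 k) (a1 k.+1) (a2 k) (a2 k.+1) (ah k) (ah k.+1); rewrite !nth_h; bit_cases.
Qed.

End SwapIndex.

Lemma swap_idx_l (P : bitseq) i : nth false P i -> swap_idx P i = i.+1.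
Proof. by rewrite /swap_idx => ->. Qed.

Lemma swap_idx_r (P : bitseq) i : swapsep P -> nth false P i -> swap_idx P i.+1 = i.
Proof.
move=> sepP Pi; have := swapsep_adj i sepP; rewrite Pi /= => Pi1.
by rewrite /swap_idx Pi1 /= Pi.
Qed.

Lemma swap_idxK (P : bitseq) : swapsep P -> involutive (swap_idx P).
Proof.
move=> sepP i; have := swapsep_adj i sepP; have := swapsep_adj i.-1 sepP.
rewrite /swap_idx; case Pi: (nth false P i) => /=; first by move=> _ ->; rewrite Pi.
case: i Pi => [|i] Pi _ _ /=; first by rewrite Pi.
by case Pi': (nth false P i) => /=; rewrite ?Pi' ?Pi.
Qed.

Section ApplySwaps.
Variable Sigma : eqType.
Implicit Types (u v t : seq Sigma) (P Q R S : bitseq).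

Lemma swap_perm_lt u P i : swap_perm_for u P -> nth false P i -> i.+1 < size u.
Proof. by case/andP=> /eqP sizeP _ /nth_true_lt; rewrite sizeP; lia. Qed.

Lemma swap_idx_lt u P i : swap_perm_for u P -> i < size u -> swap_idx P i < size u.
Proof.
move=> uP lt_iu; rewrite /swap_idx; case: ifP => [/(swap_perm_lt uP) //|_].
by case: ifP => _ //; lia.
Qed.

Lemma size_apply_swaps u P : size (apply_swaps P u) = size u.
Proof. by case: u => //= a u; rewrite size_map size_iota. Qed.

Lemma swap_perm_for_apply u P Q : swap_perm_for (apply_swaps Q u) P = swap_perm_for u P.
Proof. by rewrite /swap_perm_for size_apply_swaps. Qed.

Lemma nth_apply_swaps u P x0 i : swap_perm_for u P -> i < size u ->
  nth x0 (apply_swaps P u) i = nth x0 u (swap_idx P i).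
Proof.
case: u => [|a u] // uP lt_iu; have := swap_idx_lt uP lt_iu.
rewrite /apply_swaps (nth_map 0) ?size_iota // nth_iota // add0n.
exact: set_nth_default.
Qed.

Lemma apply_swaps_eq u v P : swap_perm_for u P -> size v = size u ->
  (forall x0 i, i < size u -> nth x0 v i = nth x0 u (swap_idx P i)) ->
  apply_swaps P u = v.
Proof.
case: u => [|a u] uP size_v nth_v; first by case: v size_v {nth_v}.
apply: (eq_from_nth (x0 := a)) => [|i]; rewrite size_apply_swaps ?size_v // => lt_iu.
by rewrite nth_apply_swaps // nth_v.
Qed.

Lemma apply_swapsK u P : swap_perm_for u P -> apply_swaps P (apply_swaps P u) = u.
Proof.
move=> uP; apply: apply_swaps_eq; rewrite ?swap_perm_for_apply ?size_apply_swaps //.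
move=> x0 i lt_iu; rewrite nth_apply_swaps ?swap_idx_lt //.
by rewrite swap_idxK //; case/andP: uP.
Qed.

Lemma valid_swaps_neq u P x0 i : swap_perm_for u P -> valid_swaps u P ->
  nth false P i -> nth x0 u i <> nth x0 u i.+1.
Proof.
move=> uP /allP validP Pi; have lt_iu := swap_perm_lt uP Pi.
have /validP : i \in iota 0 (size P) by rewrite mem_iota nth_true_lt.
rewrite Pi !onthE !(nth_map x0) //=; try lia.
by move=> /eqP neq_i eq_i; apply: neq_i; rewrite eq_i.
Qed.

Lemma valid_swaps_of_neq u P : swap_perm_for u P ->
  (forall x0 i, nth false P i -> nth x0 u i <> nth x0 u i.+1) -> valid_swaps u P.
Proof.
move=> uP neq_u; apply/allP=> i _; apply/implyP=> Pi.
have lt_iu := swap_perm_lt uP Pi.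
case: u uP neq_u lt_iu => [|a u] // uP neq_u lt_iu.
by rewrite !onthE !(nth_map a) //; try lia; apply/eqP=> -[/neq_u].
Qed.

Lemma valid_swaps_apply u P : swap_perm_for u P -> valid_swaps u P ->
  valid_swaps (apply_swaps P u) P.
Proof.
move=> uP validP; apply: valid_swaps_of_neq; rewrite ?swap_perm_for_apply // => x0 i Pi.
have lt_iu := swap_perm_lt uP Pi.
rewrite !nth_apply_swaps //; try lia.
rewrite swap_idx_l // swap_idx_r //; last by case/andP: uP.
by move=> eq_u; apply: (valid_swaps_neq (x0 := x0) uP validP Pi); rewrite eq_u.
Qed.

(* At the leftmost disagreement i of two valid swap permutations with the same
   effect, the letter landing at i would be u[i+1] for one and u[i] for the
   other. *)
Lemma valid_swaps_agree u P Q i : swap_perm_for u P -> swap_perm_for u Q ->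
  valid_swaps u P -> apply_swaps P u = apply_swaps Q u ->
  (forall j, j < i -> nth false P j = nth false Q j) ->
  nth false P i -> nth false Q i.
Proof.
move=> uP uQ validP eqPQ agree Pi; apply/negPn/negP => nQi.
have lt_iu := swap_perm_lt uP Pi.
have [x0 _] : exists x0 : Sigma, True by case: (u) lt_iu => // a; exists a.
have := congr1 (nth x0 ^~ i) eqPQ; rewrite !nth_apply_swaps //; try lia.
rewrite swap_idx_l // /swap_idx (negbTE nQi).
have := swapsep_adj i.-1 (proj2 (andP uP)).
case: i agree Pi nQi lt_iu => [|i] agree Pi nQi lt_iu /=.
  by move=> _ /esym; apply: (valid_swaps_neq (x0 := x0) uP validP Pi).
rewrite -agree // Pi andbT => ->.
by move=> /esym; apply: (valid_swaps_neq (x0 := x0) uP validP Pi).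
Qed.

Lemma valid_swaps_inj u P Q : swap_perm_for u P -> swap_perm_for u Q ->
  valid_swaps u P -> valid_swaps u Q -> apply_swaps P u = apply_swaps Q u -> P = Q.
Proof.
move=> uP uQ validP validQ eqPQ.
suff nth_PQ i : nth false P i = nth false Q i.
  apply: (eq_from_nth (x0 := false)) => [|i _]; last exact: nth_PQ.
  by case/andP: uP => /eqP ->; case/andP: uQ => /eqP ->.
elim/ltn_ind: i => i IH; apply/idP/idP.
  exact: (valid_swaps_agree uP uQ validP eqPQ IH).
by apply: (valid_swaps_agree uQ uP validQ (esym eqPQ)) => j /IH ->.
Qed.

Definition prune_swaps u P : bitseq :=
  [seq nth false P i && (onth u i != onth u i.+1) | i <- iota 0 (size P)].

Lemma nth_prune_swaps u P i :
  nth false (prune_swaps u P) i = nth false P i && (onth u i != onth u i.+1).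
Proof.
have [lt_iP|leP] := ltnP i (size P).
  by rewrite (nth_map 0) ?size_iota // nth_iota.
by rewrite !nth_default // size_map size_iota.
Qed.

Lemma prune_swaps_perm u P : swap_perm_for u P -> swap_perm_for u (prune_swaps u P).
Proof.
case/andP=> sizeP sepP; rewrite /swap_perm_for size_map size_iota sizeP /=.
apply/hasPn=> i _; rewrite !nth_prune_swaps; have := swapsep_adj i sepP.
by case: (nth false P i); case: (nth false P i.+1) => //= _; rewrite ?andbF.
Qed.

Lemma prune_swaps_valid u P : valid_swaps u (prune_swaps u P).
Proof. by apply/allP=> i _; rewrite nth_prune_swaps; apply/implyP=> /andP[]. Qed.

Lemma apply_prune_swaps u P : swap_perm_for u P ->
  apply_swaps (prune_swaps u P) u = apply_swaps P u.
Proof.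
move=> uP; apply: apply_swaps_eq; rewrite ?size_apply_swaps ?prune_swaps_perm //.
move=> x0 i lt_iu; rewrite nth_apply_swaps // /swap_idx !nth_prune_swaps.
rewrite -!(odflt_onth x0); have := swapsep_adj i.-1 (proj2 (andP uP)).
case: i {lt_iu} => [|i] /=.
  by case: (nth false P 0) => //=; case: eqP => //= ->.
case: (nth false P i.+1) => /=; first by rewrite andbT => ->; case: eqP => //= ->.
by case: (nth false P i) => //=; case: eqP => //= ->.
Qed.

Lemma hstrP u v : matching u v ->
  [/\ swap_perm_for u (hstr u v), valid_swaps u (hstr u v) & apply_swaps (hstr u v) u = v].
Proof.
case=> P [uP <-]; rewrite /hstr; case: pickP => [T /andP[/andP[sepT validT] /eqP <-] | noT].
  by split=> //; rewrite /swap_perm_for size_tuple eqxx.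
have /andP[sizeQ sepQ] := prune_swaps_perm uP.
have := noT (Tuple sizeQ).
by rewrite /= sepQ prune_swaps_valid apply_prune_swaps // eqxx.
Qed.

Lemma hstr_unique u v Q : swap_perm_for u Q -> valid_swaps u Q ->
  apply_swaps Q u = v -> hstr u v = Q.
Proof.
move=> uQ validQ QuE; have [uH validH HuE] := hstrP (ex_intro _ Q (conj uQ QuE)).
by apply: valid_swaps_inj validH validQ _; rewrite // HuE QuE.
Qed.

Lemma matching_refl u : matching u u.
Proof.
have uI : swap_perm_for u (nseq (size u).-1 false).
  rewrite /swap_perm_for size_nseq eqxx /=.
  by apply/hasPn=> i _; rewrite !nth_nseq; case: ifP; case: ifP.
exists (nseq (size u).-1 false); split=> //; apply: apply_swaps_eq => // x0 i _.
by rewrite /swap_idx !nth_nseq !if_same andbF.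
Qed.

Lemma matching_sym u v : matching u v -> matching v u.
Proof. by case=> P [uP <-]; exists P; rewrite swap_perm_for_apply apply_swapsK. Qed.

Lemma hstr_sym u v : matching u v -> hstr v u = hstr u v.
Proof.
move=> /hstrP[]; set H := hstr u v => uH validH <-.
apply: hstr_unique; rewrite ?swap_perm_for_apply ?valid_swaps_apply //.
exact: apply_swapsK.
Qed.

Lemma hstr_swapped_neq x0 u v p : matching u v -> nth false (hstr u v) p ->
  nth x0 v p <> nth x0 u p.
Proof.
move=> /hstrP[]; set H := hstr u v => uH validH <- Hp.
have lt_pu := swap_perm_lt uH Hp.
rewrite nth_apply_swaps ?swap_idx_l //; last lia.
by move=> /esym; apply: valid_swaps_neq uH validH Hp.
Qed.

Lemma count_take_apply_swaps u P x0 k c : swap_perm_for u P -> k.+1 < size u ->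
  count_mem c (take k.+1 (apply_swaps P u)) + nth false P k * (nth x0 u k == c) =
  count_mem c (take k.+1 u) + nth false P k * (nth x0 u k.+1 == c).
Proof.
move=> uP; have sepP : swapsep P by case/andP: uP.
have sizeA := size_apply_swaps u P.
elim: k => [|k IH] lt_ku.
  rewrite !(take_nth x0) ?sizeA; try lia.
  rewrite !take0 /= nth_apply_swaps //; last lia.
  rewrite /swap_idx /=.
  by case: (nth false P 0) => /=; lia.
rewrite (take_nth x0 (n := k.+1)) ?sizeA; last lia.
rewrite (take_nth x0 (n := k.+1) (s := u)); last lia.
rewrite -!cats1 !count_cat /= nth_apply_swaps //; last lia.
have := IH ltac:(lia); have := swapsep_adj k sepP; rewrite /swap_idx /=.
by case: (nth false P k); case: (nth false P k.+1) => //= _; lia.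
Qed.

Lemma swap_of_count_take_neq u P k c : swap_perm_for u P -> k.+1 < size u ->
  count_mem c (take k.+1 (apply_swaps P u)) != count_mem c (take k.+1 u) ->
  nth false P k.
Proof.
move=> uP lt_ku; have [x0 _] : exists x0 : Sigma, True by case: (u) lt_ku => // a; exists a.
have := count_take_apply_swaps x0 c uP lt_ku.
by case: (nth false P k) => //; rewrite !mul0n !addn0 => ->; rewrite eqxx.
Qed.

Lemma take3_drop x0 u p : p.+2 < size u ->
  take 3 (drop p u) = [:: nth x0 u p; nth x0 u p.+1; nth x0 u p.+2].
Proof.
move=> lt_pu; rewrite (drop_nth x0) ?(drop_nth x0 (n := p.+1)) ?(drop_nth x0 (n := p.+2)) //;
  try lia.
by rewrite /= take0.
Qed.

Lemma matching_xorb (x y z : seq Sigma) : matching x y -> matching y z ->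
  swapsep (xorb_seq (hstr x y) (hstr y z)) ->
  matching x z /\ xorb_seq (hstr x y) (hstr y z) = hstr x z.
Proof.
move=> Mxy Myz.
have [xP1 validP1 P1xE] := hstrP Mxy; have [yP2 validP2 P2yE] := hstrP Myz.
set P1 := hstr x y in xP1 validP1 P1xE *; set P2 := hstr y z in yP2 validP2 P2yE *.
set h := xorb_seq P1 P2 => seph.
have sep1 : swapsep P1 by case/andP: xP1.
have sep2 : swapsep P2 by case/andP: yP2.
have size_y : size y = size x by rewrite -P1xE size_apply_swaps.
have sizeP12 : size P1 = size P2.
  by case/andP: xP1 => /eqP ->; case/andP: yP2 => /eqP ->; rewrite size_y.
have nth_h j : nth false h j = nth false P1 j (+) nth false P2 j.
  exact: nth_xorb_seq.
have xh : swap_perm_for x h.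
  by rewrite /swap_perm_for size_xorb_seq // seph andbT; case/andP: xP1.
have hxE : apply_swaps h x = z.
  apply: apply_swaps_eq => [//||x0 i lt_ix]; first by rewrite -P2yE !size_apply_swaps.
  rewrite -P2yE nth_apply_swaps ?size_y // -P1xE nth_apply_swaps //.
    by rewrite (swap_idx_comp sep1 sep2 seph nth_h).
  by rewrite -size_y; apply: swap_idx_lt; rewrite ?size_y.
have validh : valid_swaps x h.
  apply: valid_swaps_of_neq => // x0 i; rewrite nth_h.
  case P1i: (nth false P1 i) => /=; first by move=> _; apply: valid_swaps_neq xP1 validP1 P1i.
  move=> P2i.
  have [fix_i fix_i1] := swap_idx_fixed sep1 sep2 seph nth_h P2i (negbT P1i).
  have lt_iy := swap_perm_lt yP2 P2i.
  have := valid_swaps_neq (x0 := x0) yP2 validP2 P2i.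
  rewrite size_y in lt_iy.
  by rewrite -P1xE !nth_apply_swaps ?fix_i ?fix_i1 // ltnW.
by split; [exists h | rewrite (hstr_unique xh validh hxE)].
Qed.

Section Window.
Variables (x y z t : seq Sigma) (p : nat) (P1 P2 R S : bitseq).
Hypotheses (xP1 : swap_perm_for x P1) (validP1 : valid_swaps x P1) (P1xE : apply_swaps P1 x = y).
Hypotheses (yP2 : swap_perm_for y P2) (validP2 : valid_swaps y P2) (P2yE : apply_swaps P2 y = z).
Hypotheses (P1p : nth false P1 p) (P2p1 : nth false P2 p.+1).
Hypotheses (xR : swap_perm_for x R) (RxE : apply_swaps R x = t).
Hypotheses (zS : swap_perm_for z S) (SzE : apply_swaps S z = t).

Lemma window_lt : p.+2 < size x.
Proof. by have := swap_perm_lt yP2 P2p1; rewrite -P1xE size_apply_swaps. Qed.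

Lemma window_swaps : nth false R p /\ nth false S p.+1.
Proof.
have size_y : size y = size x by rewrite -P1xE size_apply_swaps.
have lt_px := window_lt.
have [x0 _] : exists x0 : Sigma, True by case: (x) lt_px => // a; exists a.
have P2p : nth false P2 p = false by have := swapsep_adj p (proj2 (andP yP2)); rewrite P2p1 andbT.
have P1p1 : nth false P1 p.+1 = false by have := swapsep_adj p (proj2 (andP xP1)); rewrite P1p.
have lt_p1 : p.+1 < size x := ltnW lt_px.
have y_p1 : nth x0 y p.+1 = nth x0 x p.
  by rewrite -P1xE nth_apply_swaps ?swap_idx_r //; case/andP: xP1.
have z_p1 : nth x0 z p.+1 = nth x0 y p.+2.
  by rewrite -P2yE nth_apply_swaps ?swap_idx_l ?size_y.
have neq_x := valid_swaps_neq (x0 := x0) xP1 validP1 P1p.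
have neq_y := valid_swaps_neq (x0 := x0) yP2 validP2 P2p1.
have size_z : size z = size x by rewrite -P2yE size_apply_swaps.
set b := nth x0 x p.
have xb1 : (nth x0 x p.+1 == b) = false by apply/negbTE/eqP=> /esym /neq_x.
have yb1 : (nth x0 y p.+1 == b) by rewrite y_p1.
have yb2 : (nth x0 y p.+2 == b) = false by rewrite /b -y_p1; apply/negbTE/eqP=> /esym /neq_y.
have zb1 : (nth x0 z p.+1 == b) = false by rewrite z_p1.
have cnt u Q k := @count_take_apply_swaps u Q x0 k b.
(* Counts of b in prefixes: at k = p, t <= z = y = x - 1; at k = p+1,
   t >= x = y = z + 1. *)
split.
- have := cnt x P1 p xP1 lt_p1; rewrite P1xE P1p eqxx xb1 /= => cnt_y.
  have := cnt y P2 p yP2 ltac:(by rewrite size_y); rewrite P2yE P2p /= => cnt_z.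
  have := cnt z S p zS ltac:(by rewrite size_z); rewrite SzE zb1 muln0 => cnt_t.
  apply: (swap_of_count_take_neq (c := b) xR lt_p1); rewrite RxE.
  by move: cnt_y cnt_z cnt_t; clear; lia.
- have := cnt x P1 p.+1 xP1 lt_px; rewrite P1xE P1p1 /= => cnt_y.
  have := cnt y P2 p.+1 yP2 ltac:(by rewrite size_y); rewrite P2yE P2p1 yb1 yb2 /= => cnt_z.
  have := cnt x R p.+1 xR lt_px; rewrite RxE xb1 muln0 => cnt_t.
  apply: (swap_of_count_take_neq (c := b) zS); first by rewrite size_z.
  by rewrite SzE; move: cnt_y cnt_z cnt_t; clear; lia.
Qed.

Lemma window_eq : take 3 (drop p t) = take 3 (drop p y).
Proof.
have [Rp Sp1] := window_swaps; have lt_px := window_lt.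
have [x0 _] : exists x0 : Sigma, True by case: (x) lt_px => // a; exists a.
have size_y : size y = size x by rewrite -P1xE size_apply_swaps.
have size_z : size z = size x by rewrite -P2yE size_apply_swaps.
have size_t : size t = size x by rewrite -RxE size_apply_swaps.
have lt_p1 : p.+1 < size x := ltnW lt_px; have lt_p := ltnW lt_p1.
have [sepP1 sepR] : swapsep P1 /\ swapsep R by case/andP: xP1; case/andP: xR.
have sepS : swapsep S by case/andP: zS.
rewrite !(take3_drop x0) ?size_t ?size_y //.
have -> : nth x0 t p = nth x0 y p.
  by rewrite -RxE -P1xE !nth_apply_swaps ?swap_idx_l.
have -> : nth x0 t p.+1 = nth x0 y p.+1.
  by rewrite -RxE -P1xE !nth_apply_swaps ?swap_idx_r.
suff -> : nth x0 t p.+2 = nth x0 y p.+2 by [].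
rewrite -SzE nth_apply_swaps ?swap_idx_r ?size_z //.
by rewrite -P2yE nth_apply_swaps ?swap_idx_l ?size_y.
Qed.

End Window.

Lemma interleaved_swaps (x y z : seq Sigma) p :
  matching x y -> matching y z -> nth false (hstr x y) p -> nth false (hstr y z) p.+1 ->
  ~ matching x z /\
  (forall t, matching t x -> matching t z -> take 3 (drop p t) = take 3 (drop p y)).
Proof.
move=> Mxy Myz P1p P2p1.
have [xP1 validP1 P1xE] := hstrP Mxy; have [yP2 validP2 P2yE] := hstrP Myz.
have window t : matching t x -> matching t z -> take 3 (drop p t) = take 3 (drop p y).
  move=> /matching_sym[R [xR RxE]] /matching_sym[S [zS SzE]].
  exact: window_eq xP1 validP1 P1xE yP2 validP2 P2yE P1p P2p1 xR RxE zS SzE.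
split=> // Mxz; have lt_px := window_lt P1xE yP2 P2p1.
have [x0 _] : exists x0 : Sigma, True by case: (x) lt_px => // a; exists a.
have lt_py : p.+2 < size y by rewrite -P1xE size_apply_swaps.
have := window x (matching_refl x) Mxz.
rewrite !(take3_drop x0) //.
by case=> eq_p _ _; apply: hstr_swapped_neq Mxy P1p (esym eq_p).
Qed.

End ApplySwaps.

Theorem mainTheorem2 (Sigma : eqType) (n : nat) (s1 s2 s3 : seq Sigma) :
  size s1 = n -> size s2 = n -> size s3 = n ->
  matching s1 s2 -> matching s2 s3 ->
  let h := xorb_seq (hstr s1 s2) (hstr s2 s3) in
  (swapsep h -> matching s1 s3 /\ h = hstr s1 s3) /\
  (forall p : nat, nth false h p -> nth false h p.+1 ->
     ~ matching s1 s3 /\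
     (forall t : seq Sigma, size t = n -> matching t s1 -> matching t s3 ->
        take 3 (drop p t) = take 3 (drop p s2))).
Proof.
move=> size1 size2 _ M12 M23 h; split; first exact: matching_xorb.
move=> p hp hp1.
have [/andP[/eqP sizeP1 sep1] _ _] := hstrP M12.
have [/andP[/eqP sizeP2 sep2] _ _] := hstrP M23.
have sizeP : size (hstr s1 s2) = size (hstr s2 s3) by rewrite sizeP1 sizeP2 size1 size2.
case/orP: (xorb_adjacent sizeP sep1 sep2 hp hp1) => /andP[P1p P2p1].
  have [nM13 window] := interleaved_swaps M12 M23 P1p P2p1.
  by split=> // t _; apply: window.
have M32 := matching_sym M23; have M21 := matching_sym M12.
rewrite -(hstr_sym M23) in P1p; rewrite -(hstr_sym M12) in P2p1.
have [nM31 window] := interleaved_swaps M32 M21 P1p P2p1.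
by split=> [/matching_sym // | t _ Mt1 Mt3]; apply: window.
Qed.
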